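(* Let $\rho$ be a bipartite density matrix on $\mathbb{C}^n\otimes\mathbb{C}^m$ such that its partial transpose $\rho^{PT}$ is not positive semidefinite. Then $\rho$ can be converted by local quantum operations and classical communication (LQ+CC) into a density matrix $\rho_{bc}$ on $\mathbb{C}^d\otimes\mathbb{C}^d$, for some $d\le\min(n,m)$ and some real parameters $b,c$, such that $\rho_{bc}^{PT}$ is not positive semidefinite, where $$\rho_{bc}=a\sum_{i=0}^{d-1}|ii\rangle\langle ii|+b\sum_{0\le i<j\le d-1}|\psi^-_{ij}\rangle\langle\psi^-_{ij}|+c\sum_{0\le i<j\le d-1}|\psi^+_{ij}\rangle\langle\psi^+_{ij}|,\qquad da+(b+c)\frac{d(d-1)}{2}=1.$$
   Context: $\{|i\rangle\}$ is an orthonormal basis of $\mathbb{C}^d$ and $|\psi^{\pm}_{ij}\rangle=\frac{1}{\sqrt2}(|ij\rangle\pm|ji\rangle)$. The partial transpose (applied to the second factor, Bob's) is defined by $\langle ij|\rho^{PT}|kl\rangle=\langle il|\rho|kj\rangle$; whether $\rho^{PT}\ge0$ does not depend on the basis used. LQ+CC operations are arbitrary sequences of local quantum operations by each party (appending ancillas, local unitaries, local measurements/filters with postselection on outcomes, discarding subsystems, local projections) together with classical communication between the parties. *)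

From HB Require Import structures.
From mathcomp Require Import all_boot all_order all_algebra.
From mathcomp Require Import mxtens complex.
From mathcomp Require Import reals.
Set Implicit Arguments.
Unset Strict Implicit.
Unset Printing Implicit Defensive.
Import Order.TTheory GRing.Theory Num.Theory.
Local Open Scope ring_scope.

(* Conventions: a bipartite operator on C^n (x) C^m is a matrix indexed by
   'I_(n*m), where the basis vector |i j> (i : 'I_n, j : 'I_m) has index
   mxtens_index (i, j) = i*m + j, and A *t B is the Kronecker product. *)

Section QDefs.
Variable C : numClosedFieldType.

Definition adjmx (p q : nat) (A : 'M[C]_(p, q)) : 'M[C]_(q, p) :=
  (map_mx Num.conj A)^T.

Definition hermitian_mx (N : nat) (A : 'M[C]_N) : Prop := adjmx A = A.

Definition psd (N : nat) (A : 'M[C]_N) : Prop :=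
  hermitian_mx A /\ forall v : 'cV[C]_N, 0 <= (adjmx v *m A *m v) 0 0.

Definition density (N : nat) (A : 'M[C]_N) : Prop := psd A /\ \tr A = 1.

(* partial transpose on Bob's (second) factor:
   <ij| A^PT |kl> = <il| A |kj> *)
Definition ptrans (n m : nat) (A : 'M[C]_(n * m)) : 'M[C]_(n * m) :=
  \matrix_(p, q)
    A (mxtens_index ((mxtens_unindex p).1, (mxtens_unindex q).2))
      (mxtens_index ((mxtens_unindex q).1, (mxtens_unindex p).2)).

Definition ket (n m : nat) (i : 'I_n) (j : 'I_m) : 'cV[C]_(n * m) :=
  delta_mx (mxtens_index (i, j)) 0.

Definition proj (N : nat) (v : 'cV[C]_N) : 'M[C]_N := v *m adjmx v.

(* rho_bc = a sum_i |ii><ii| + b sum_{i<j} |psi-_ij><psi-_ij|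
            + c sum_{i<j} |psi+_ij><psi+_ij|,
   with |psi+-_ij> = (|ij> +- |ji>)/sqrt 2, so |psi><psi| = 1/2 proj(|ij> +- |ji>) *)
Definition rho_abc (d : nat) (a b c : C) : 'M[C]_(d * d) :=
  a *: (\sum_(i < d) proj (ket i i))
  + b *: (\sum_(i < d) \sum_(j < d | (i < j)%N) (2^-1 *: proj (ket i j - ket j i)))
  + c *: (\sum_(i < d) \sum_(j < d | (i < j)%N) (2^-1 *: proj (ket i j + ket j i))).

(* LQ+CC protocols (with postselection), acting on unnormalized operators.
   A protocol is a finite tree: at each node one party performs a local
   operation with (arbitrary, finitely many) Kraus operators K_i mapping its
   current local space into a new one (this covers appending ancillas,
   local unitaries, local measurements/filters, local projections and
   discarding subsystems); the outcome i is communicated classically and the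
   remaining protocol L i may depend on it.  Outcomes may be postselected
   (simply omitted from the family) or forgotten (summed).  Since the final
   state is renormalized, the overall scale of the Kraus operators is
   irrelevant, so no completeness condition is imposed. *)
Inductive locc : forall (n m n' m' : nat),
    ('M[C]_(n * m) -> 'M[C]_(n' * m')) -> Prop :=
| locc_done (n m : nat) : @locc n m n m id
| locc_alice (n m n1 n' m' k : nat) (K : 'I_k -> 'M[C]_(n1, n))
    (L : 'I_k -> 'M[C]_(n1 * m) -> 'M[C]_(n' * m')) :
    (forall i, @locc n1 m n' m' (L i)) ->
    @locc n m n' m' (fun rho => \sum_(i < k)
       L i ((K i *t (1%:M : 'M[C]_m)) *m rho *m adjmx (K i *t (1%:M : 'M[C]_m))))
| locc_bob (n m m1 n' m' k : nat) (K : 'I_k -> 'M[C]_(m1, m))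
    (L : 'I_k -> 'M[C]_(n * m1) -> 'M[C]_(n' * m')) :
    (forall i, @locc n m1 n' m' (L i)) ->
    @locc n m n' m' (fun rho => \sum_(i < k)
       L i (((1%:M : 'M[C]_n) *t K i) *m rho *m adjmx ((1%:M : 'M[C]_n) *t K i))).

End QDefs.

Definition rC (R : rcfType) (x : R) : R[i] := (x%:C)%C.

(* Since rho^PT is Hermitian but not positive, some v has <v|rho^PT|v> < 0.
   Factoring the coefficient matrix of v as A^* B, with A and B having
   d = min(n, m) rows, the local filter A (x) B turns rho into a positive Y
   with <Phi|Y^PT|Phi> = <v|rho^PT|v> < 0, where Phi = sum_k |kk>.
   Averaging Y over the conjugations by U (x) U, U a permutation matrix times
   a diagonal of fourth roots of unity, is an LQ+CC operation; it keeps Y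
   positive, multiplies <Phi|Y^PT|Phi> by a positive constant, and lands in
   the span of sum_i |ii><ii|, sum_(i<>j) |ij><ij| and sum_(i<>j) |ij><ji|.
   Positivity forces the coefficient of the second term to be positive, so
   the result is a positive multiple of some rho_bc, and <Phi|rho_bc^PT|Phi>
   is still negative. *)

From HB Require Import structures.
From mathcomp Require Import all_boot all_order all_algebra fingroup perm.
From mathcomp Require Import mxtens complex.
From mathcomp Require Import reals boolp.
From mathcomp Require Import ring.
Import Order.TTheory GRing.Theory Num.Theory.
Local Open Scope ring_scope.
Set Implicit Arguments.
Unset Strict Implicit.
Unset Printing Implicit Defensive.

Section Sesquilinear.
Variable C : numClosedFieldType.

Lemma adjmxE p q (A : 'M[C]_(p, q)) i j : adjmx A i j = (A j i)^*.
Proof. by rewrite !mxE. Qed.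

Lemma adjmx_mul p q r (A : 'M[C]_(p, q)) (B : 'M[C]_(q, r)) :
  adjmx (A *m B) = adjmx B *m adjmx A.
Proof. by rewrite /adjmx map_mxM trmx_mul. Qed.

Lemma adjmxK p q (A : 'M[C]_(p, q)) : adjmx (adjmx A) = A.
Proof. by apply/matrixP=> i j; rewrite !adjmxE conjCK. Qed.

Lemma adjmxD p q (A B : 'M[C]_(p, q)) : adjmx (A + B) = adjmx A + adjmx B.
Proof. by apply/matrixP=> i j; rewrite !mxE rmorphD. Qed.

Lemma adjmx1 p : adjmx (1%:M : 'M[C]_p) = 1%:M.
Proof. by apply/matrixP=> i j; rewrite !mxE eq_sym rmorph_nat. Qed.

Lemma adjmxZ p q c (A : 'M[C]_(p, q)) : adjmx (c *: A) = c^* *: adjmx A.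
Proof. by apply/matrixP=> i j; rewrite !mxE rmorphM. Qed.

Lemma addmx_entry p q (A B : 'M[C]_(p, q)) i j : (A + B) i j = A i j + B i j.
Proof. by rewrite mxE. Qed.

Lemma scalemx_entry p q c (A : 'M[C]_(p, q)) i j : (c *: A) i j = c * A i j.
Proof. by rewrite mxE. Qed.

Lemma mulmx_adj_conj p q r (K : 'M[C]_(p, q)) (L : 'M[C]_(q, r)) (A : 'M[C]_r) :
  K *m (L *m A *m adjmx L) *m adjmx K = (K *m L) *m A *m adjmx (K *m L).
Proof. by rewrite adjmx_mul !mulmxA. Qed.

Lemma conj_mxE p q (K : 'M[C]_(p, q)) (A : 'M[C]_q) i k :
  (K *m A *m adjmx K) i k = \sum_r \sum_s K i r * A r s * (K k s)^*.
Proof.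
rewrite mxE exchange_big /=; apply: eq_bigr => s _.
by rewrite mxE big_distrl /=; apply: eq_bigr => r _; rewrite adjmxE.
Qed.

Lemma sesqformE N (u w : 'cV[C]_N) (A : 'M[C]_N) :
  (adjmx u *m A *m w) 0 0 = \sum_p \sum_q (u p 0)^* * A p q * w q 0.
Proof.
rewrite mxE exchange_big /=; apply: eq_bigr => q _.
by rewrite mxE big_distrl /=; apply: eq_bigr => p _; rewrite adjmxE.
Qed.

Lemma sum_delta_l (T : finType) (a : T) (F : T -> C) :
  \sum_i ((i == a)%:R * F i) = F a.
Proof.
rewrite (bigD1 a) //= eqxx mul1r big1 ?addr0 // => i /negPf ->.
by rewrite mul0r.
Qed.

Lemma sum_delta_r (T : finType) (a : T) (F : T -> C) :
  \sum_i (F i * (i == a)%:R) = F a.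
Proof. by rewrite -[RHS](sum_delta_l a); apply: eq_bigr => i _; rewrite mulrC. Qed.

Lemma sesqform_delta N (A : 'M[C]_N) (p q : 'I_N) :
  (adjmx (delta_mx p 0 : 'cV[C]_N) *m A *m (delta_mx q 0 : 'cV[C]_N)) 0 0 = A p q.
Proof.
rewrite sesqformE.
under eq_bigr => r _ do under eq_bigr => s _ do rewrite !mxE !andbT.
under eq_bigr => r _ do rewrite sum_delta_r rmorph_nat.
by rewrite sum_delta_l.
Qed.

End Sesquilinear.

Section Psd.
Variable C : numClosedFieldType.

Lemma psd_conj p q (K : 'M[C]_(p, q)) (A : 'M[C]_q) :
  psd A -> psd (K *m A *m adjmx K).
Proof.
case=> hA posA; split; first by rewrite /hermitian_mx !adjmx_mul adjmxK hA mulmxA.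
by move=> v; have := posA (adjmx K *m v); rewrite adjmx_mul adjmxK !mulmxA.
Qed.

Lemma psd0 N : psd (0 : 'M[C]_N).
Proof.
split; first by apply/matrixP=> i j; rewrite !mxE rmorph0.
by move=> v; rewrite mulmx0 mul0mx mxE.
Qed.

Lemma psdD N (A B : 'M[C]_N) : psd A -> psd B -> psd (A + B).
Proof.
case=> hA posA [hB posB]; split; first by rewrite /hermitian_mx adjmxD hA hB.
by move=> v; rewrite mulmxDr mulmxDl mxE addr_ge0.
Qed.

Lemma psd_sum N (I : finType) (F : I -> 'M[C]_N) :
  (forall i, psd (F i)) -> psd (\sum_i F i).
Proof. by move=> psdF; elim/big_rec: _ => [|i A _]; [exact: psd0 | exact: psdD]. Qed.

Lemma psdZ N c (A : 'M[C]_N) : 0 <= c -> psd A -> psd (c *: A).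
Proof.
move=> c_ge0 [hA posA]; split.
  by rewrite /hermitian_mx adjmxZ hA conj_Creal // ger0_real.
by move=> v; rewrite -scalemxAr -scalemxAl mxE mulr_ge0.
Qed.

Lemma psd_diag_ge0 N (A : 'M[C]_N) i : psd A -> 0 <= A i i.
Proof. by case=> _ /(_ (delta_mx i 0)); rewrite sesqform_delta. Qed.

Lemma psd_pair_sum_ge0 N (A : 'M[C]_N) i j : psd A -> 0 <= A i i + A i j + A j i + A j j.
Proof.
case=> _ /(_ (delta_mx i 0 + delta_mx j 0)).
by rewrite adjmxD !mulmxDl !mulmxDr !addmx_entry !sesqform_delta addrA.
Qed.

Lemma hermitian_sesqform_real N (A : 'M[C]_N) (v : 'cV[C]_N) :
  hermitian_mx A -> (adjmx v *m A *m v) 0 0 \is Num.real.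
Proof.
move=> hA; apply/CrealP.
have: adjmx (adjmx v *m A *m v) = adjmx v *m A *m v.
  by rewrite !adjmx_mul adjmxK hA mulmxA.
by move/matrixP/(_ 0 0); rewrite adjmxE.
Qed.

Lemma not_psd_sesqform_lt0 N (A : 'M[C]_N) : hermitian_mx A -> ~ psd A ->
  exists v : 'cV[C]_N, (adjmx v *m A *m v) 0 0 < 0.
Proof.
move=> hA; apply: contra_notP => no_neg; split => // v.
have := hermitian_sesqform_real v hA; rewrite realE => /orP[//|]; rewrite le_eqVlt.
by case/orP=> [/eqP->//|neg]; case: no_neg; exists v.
Qed.

End Psd.

Section Bipartite.
Variable C : numClosedFieldType.
Local Notation idx := mxtens_index.

Lemma sum_mxtens n m (F : 'I_(n * m) -> C) :
  \sum_r F r = \sum_(i < n) \sum_(j < m) F (idx (i, j)).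
Proof.
rewrite pair_big /= (reindex (@mxtens_index n m)) /=; first by apply: eq_bigr => -[].
by exists (@mxtens_unindex n m) => r _; rewrite (mxtens_indexK, mxtens_unindexK).
Qed.

Lemma ptransE n m (X : 'M[C]_(n * m)) a b c e :
  ptrans X (idx (a, b)) (idx (c, e)) = X (idx (a, e)) (idx (c, b)).
Proof. by rewrite mxE !mxtens_indexK. Qed.

Lemma ptrans_hermitian n m (X : 'M[C]_(n * m)) :
  hermitian_mx X -> hermitian_mx (ptrans X).
Proof. by move=> hX; apply/matrixP => p q; rewrite adjmxE !mxE -{2}hX adjmxE. Qed.

Lemma ketE n m (i : 'I_n) (j : 'I_m) a b :
  ket C i j (idx (a, b)) 0 = ((a == i) && (b == j))%:R.
Proof. by rewrite mxE andbT (can_eq (@mxtens_indexK n m)) xpair_eqE. Qed.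

Definition tr_swap d (X : 'M[C]_(d * d)) : C :=
  \sum_(k < d) \sum_(l < d) X (idx (k, l)) (idx (l, k)).

Definition maxent d : 'cV[C]_(d * d) := \sum_(k < d) ket C k k.

Lemma maxentE d (a b : 'I_d) : maxent d (idx (a, b)) 0 = (a == b)%:R.
Proof.
rewrite summxE (eq_bigr (fun k => (k == a)%:R * (k == b)%:R)) => [|k _].
  by rewrite sum_delta_l.
by rewrite ketE -natrM mulnb ![_ == k]eq_sym.
Qed.

Lemma sesqform_ptrans_maxent d (X : 'M[C]_(d * d)) :
  (adjmx (maxent d) *m ptrans X *m maxent d) 0 0 = tr_swap X.
Proof.
rewrite sesqformE sum_mxtens; apply: eq_bigr => k _.
rewrite (bigD1 k) //= [X in _ + X]big1 => [|l /negPf lk]; last first.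
  by rewrite big1 // => q _; rewrite maxentE eq_sym lk rmorph0 !mul0r.
rewrite addr0 sum_mxtens maxentE eqxx rmorph1; apply: eq_bigr => l _.
rewrite (bigD1 l) //= [X in _ + X]big1 => [|j /negPf jl]; last by rewrite maxentE eq_sym jl mulr0.
by rewrite addr0 maxentE eqxx mul1r mulr1 ptransE.
Qed.

Lemma tr_swapZ d c (X : 'M[C]_(d * d)) : tr_swap (c *: X) = c * tr_swap X.
Proof.
rewrite /tr_swap mulr_sumr; apply: eq_bigr => k _.
by rewrite mulr_sumr; apply: eq_bigr => l _; rewrite mxE.
Qed.

Lemma not_psd_ptrans d (X : 'M[C]_(d * d)) : tr_swap X < 0 -> ~ psd (ptrans X).
Proof.
move=> swapX [_ /(_ (maxent d))]; rewrite sesqform_ptrans_maxent => /(le_lt_trans)/(_ swapX).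
by rewrite ltxx.
Qed.

Lemma adj_mul_factor_minn n m (M : 'M[C]_(n, m)) :
  exists (A : 'M[C]_(minn n m, n)) (B : 'M[C]_(minn n m, m)), adjmx A *m B = M.
Proof.
case: leqP => _; first by exists 1%:M, M; rewrite adjmx1 mul1mx.
by exists (adjmx M), 1%:M; rewrite adjmxK mulmx1.
Qed.

End Bipartite.

Section LocalFilter.
Variable C : numClosedFieldType.
Local Notation idx := mxtens_index.

Lemma exchange_big_in4 (I1 I2 I3 I4 I5 : finType) (F : I1 -> I2 -> I3 -> I4 -> I5 -> C) :
  \sum_a \sum_b \sum_c \sum_e \sum_f F a b c e f
  = \sum_b \sum_c \sum_e \sum_f \sum_a F a b c e f.
Proof.
rewrite exchange_big; apply: eq_bigr => b _; rewrite exchange_big; apply: eq_bigr => c _.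
by rewrite exchange_big; apply: eq_bigr => e _; rewrite exchange_big.
Qed.

Lemma tr_swap_local_conj n m d (A : 'M[C]_(d, n)) (B : 'M[C]_(d, m))
    (X : 'M[C]_(n * m)) (v : 'cV[C]_(n * m)) :
  (forall i j, (adjmx A *m B) i j = v (idx (i, j)) 0) ->
  tr_swap ((A *t B) *m X *m adjmx (A *t B)) = (adjmx v *m ptrans X *m v) 0 0.
Proof.
move=> vE.
have vE' i j : (v (idx (i, j)) 0)^* = \sum_k A k i * (B k j)^*.
  by rewrite -vE mxE rmorph_sum; apply: eq_bigr => k _; rewrite adjmxE rmorphM /= conjCK.
transitivity (\sum_k \sum_l \sum_i \sum_j \sum_i' \sum_j'
    (A k i * B l j * X (idx (i, j)) (idx (i', j')) * (A l i' * B k j')^*)).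
  apply: eq_bigr => k _; apply: eq_bigr => l _.
  rewrite conj_mxE sum_mxtens; apply: eq_bigr => i _; apply: eq_bigr => j _.
  by rewrite sum_mxtens; apply: eq_bigr => i' _; apply: eq_bigr => j' _; rewrite !tensmxE.
transitivity (\sum_i \sum_j \sum_i' \sum_j'
    ((v (idx (i, j')) 0)^* * X (idx (i, j)) (idx (i', j')) * v (idx (i', j)) 0)).
  under eq_bigr => k _ do rewrite exchange_big_in4.
  rewrite exchange_big_in4; do 4!(apply: eq_bigr => ? _).
  rewrite vE' mulr_suml mulr_suml; apply: eq_bigr => k _.
  rewrite -vE mxE !mulr_sumr; apply: eq_bigr => l _.
  by rewrite adjmxE rmorphM; ring.
rewrite sesqformE sum_mxtens; apply: eq_bigr => i _.
under [RHS]eq_bigr => j' _ do rewrite sum_mxtens exchange_big /=.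
rewrite [RHS]exchange_big /=; apply: eq_bigr => j _.
rewrite [RHS]exchange_big /=; apply: eq_bigr => i' _; apply: eq_bigr => j' _.
by rewrite ptransE.
Qed.

End LocalFilter.

Section Phases.
Variable C : numClosedFieldType.

Lemma expCi_mod4 k : ('i : C) ^+ (k %% 4) = 'i ^+ k.
Proof.
have i4 : ('i : C) ^+ 4 = 1 by rewrite (exprM _ 2 2) sqrCi sqrrN expr1n.
by rewrite {2}(divn_eq k 4) exprD mulnC exprM i4 expr1n mul1r.
Qed.

Lemma expCi_ordS (y : 'I_4) : ('i : C) ^+ ordS y = 'i * 'i ^+ y.
Proof. by rewrite expCi_mod4 exprS. Qed.

Lemma expCi_unit k : ('i : C) ^+ k * ('i ^+ k)^* = 1.
Proof. by rewrite -normCK normrX normCi !expr1n. Qed.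

Lemma eq_expCi_le2 a b : (a <= 2)%N -> (b <= 2)%N -> (('i : C) ^+ a == 'i ^+ b) = (a == b).
Proof.
have iN1 : ('i : C) != 1 by apply: contraNneq (nonRealCi C) => ->; apply: rpred1.
have iNN1 : ('i : C) != -1 by apply: contraNneq (nonRealCi C) => ->; apply: rpredN1.
have N1N1 : (-1 : C) != 1 by rewrite lt_eqF // -subr_gt0 opprK addr_gt0 ?ltr01.
case: a => [|[|[|//]]]; case: b => [|[|[|//]]] // _ _; rewrite ?expr0 ?expr1 ?sqrCi ?eqxx //=;
  by apply/negbTE; rewrite // eq_sym.
Qed.

Definition same_pair d (i j k l : 'I_d) := ((i == k) && (j == l)) || ((i == l) && (j == k)).

Lemma count_eq_same_pair d (i j k l : 'I_d) :
  (forall p, ((i == p) + (j == p))%N = ((k == p) + (l == p))%N) -> same_pair i j k l.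
Proof.
move=> cnt; have := cnt i; have := cnt j; rewrite /same_pair !eqxx.
case: (eqVneq k i) => [->|_]; case: (eqVneq l i) => [->|_];
  by rewrite ![j == _]eq_sym; case: (i == j); case: (k == j); case: (l == j).
Qed.

Definition shift_at d (p : 'I_d) (x : {ffun 'I_d -> 'I_4}) : {ffun 'I_d -> 'I_4} :=
  [ffun q => if q == p then ordS (x q) else x q].

Lemma shift_at_inj d (p : 'I_d) : injective (shift_at p).
Proof.
move=> x y /ffunP xy; apply/ffunP => q; have := xy q; rewrite !ffunE.
by case: (q == p) => // /ordS_inj.
Qed.

Lemma expCi_shift_at d (p : 'I_d) x q :
  ('i : C) ^+ shift_at p x q = 'i ^+ (q == p) * 'i ^+ x q.
Proof. by rewrite ffunE; case: (q == p); rewrite ?expCi_ordS ?mul1r. Qed.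

Lemma phase_sum d (i j k l : 'I_d) :
  \sum_(x : {ffun 'I_d -> 'I_4}) ('i : C) ^+ x i * 'i ^+ x j * ('i ^+ x k)^* * ('i ^+ x l)^*
  = (same_pair i j k l)%:R * (4 ^ d)%:R.
Proof.
case: (boolP (same_pair i j k l)) => [/orP pair_ijkl | not_pair].
  have card4 : #|{: {ffun 'I_d -> 'I_4}}| = (4 ^ d)%N by rewrite card_ffun !card_ord.
  rewrite mul1r -card4 -sumr_const; apply: eq_bigr => x _.
  transitivity ((('i : C) ^+ x i * ('i ^+ x i)^*) * ('i ^+ x j * ('i ^+ x j)^*)).
    by case: pair_ijkl => /andP[/eqP<- /eqP<-]; ring.
  by rewrite !expCi_unit mulr1.
have [p cnt_p] : exists p, ((i == p) + (j == p))%N != ((k == p) + (l == p))%N.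
  case: (pickP (fun p => ((i == p) + (j == p))%N != ((k == p) + (l == p))%N)) => [p ?|cnt].
    by exists p.
  by case/negP: not_pair; apply: count_eq_same_pair => q; apply/eqP/negbFE/cnt.
set a := ((i == p) + (j == p))%N; set b := ((k == p) + (l == p))%N.
set S := \sum_x _; rewrite mul0r.
have S_shift : S = 'i ^+ a * ('i ^+ b)^* * S.
  rewrite {1}/S (reindex_inj (@shift_at_inj d p)) /= /S big_distrr /=.
  apply: eq_bigr => x _; rewrite !expCi_shift_at /a /b !exprD !rmorphM.
  ring.
have : 'i ^+ b * S = 'i ^+ a * ('i ^+ b * ('i ^+ b)^*) * S by rewrite {1}S_shift; ring.
rewrite expCi_unit mulr1 => /eqP; rewrite -subr_eq0 -mulrBl mulf_eq0 subr_eq0.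
rewrite eq_expCi_le2 1?eq_sym ?(negPf cnt_p) => [/eqP //||];
  exact: leq_add (leq_b1 _) (leq_b1 _).
Qed.

End Phases.

Section Twirl.
Variable C : numClosedFieldType.
Local Notation idx := mxtens_index.

Lemma monomial_conj_mxE p q (f : 'I_p -> 'I_q) (c : 'I_p -> C) (Y : 'M[C]_q) a b :
  let M := \matrix_(a, i) ((i == f a)%:R * c a) in
  (M *m Y *m adjmx M) a b = c a * Y (f a) (f b) * (c b)^*.
Proof.
rewrite /= conj_mxE (bigD1 (f a)) //= [X in _ + X]big1 ?addr0 => [|r /negPf ra]; last first.
  by apply: big1 => s _; rewrite !mxE ra !mul0r.
rewrite (bigD1 (f b)) //= [X in _ + X]big1 ?addr0 => [|s /negPf sb]; last first.
  by rewrite !mxE sb mul0r rmorph0 mulr0.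
by rewrite !mxE !eqxx !mul1r.
Qed.

(* Sign phases alone would not do: they leave the entries |ii><jj| alive. *)
Definition perm_phase d := ({perm 'I_d} * {ffun 'I_d -> 'I_4})%type.

Definition perm_phase_mx d (g : perm_phase d) : 'M[C]_d :=
  \matrix_(a, i) ((i == g.1 a)%:R * 'i ^+ g.2 a).

Definition twirl d (Y : 'M[C]_(d * d)) : 'M[C]_(d * d) :=
  \sum_(g : perm_phase d)
    (perm_phase_mx g *t perm_phase_mx g) *m Y *m adjmx (perm_phase_mx g *t perm_phase_mx g).

Lemma sum_perm_phase d (F : perm_phase d -> C) : \sum_s \sum_x F (s, x) = \sum_g F g.
Proof. by rewrite pair_bigA; apply: eq_bigr => -[]. Qed.

Definition perm_sum d (Y : 'M[C]_(d * d)) (a b c e : 'I_d) : C :=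
  \sum_(s : {perm 'I_d}) Y (idx (s a, s b)) (idx (s c, s e)).

Lemma perm_phase_tensE d (g : perm_phase d) :
  perm_phase_mx g *t perm_phase_mx g =
  \matrix_(r, q) ((q == idx (g.1 (mxtens_unindex r).1, g.1 (mxtens_unindex r).2))%:R *
                 ('i ^+ g.2 (mxtens_unindex r).1 * 'i ^+ g.2 (mxtens_unindex r).2)).
Proof.
apply/matrixP => r q; case: (mxtens_indexP r) => a b; case: (mxtens_indexP q) => i j.
rewrite tensmxE !mxE !mxtens_indexK (can_eq (@mxtens_indexK d d)) xpair_eqE /=.
by rewrite -mulnb natrM; ring.
Qed.

Lemma twirlE d (Y : 'M[C]_(d * d)) a b c e :
  twirl Y (idx (a, b)) (idx (c, e)) = (same_pair a b c e)%:R * (4 ^ d)%:R * perm_sum Y a b c e.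
Proof.
rewrite summxE -[LHS]sum_perm_phase /perm_sum big_distrr /=; apply: eq_bigr => s _.
under eq_bigr => x _ do rewrite perm_phase_tensE monomial_conj_mxE !mxtens_indexK.
rewrite -phase_sum big_distrl /=; apply: eq_bigr => x _.
by rewrite !rmorphM; ring.
Qed.

Lemma perm_sum_perm d (Y : 'M[C]_(d * d)) (t : {perm 'I_d}) a b c e :
  perm_sum Y (t a) (t b) (t c) (t e) = perm_sum Y a b c e.
Proof.
by rewrite /perm_sum [RHS](reindex_inj (mulgI t)); apply: eq_bigr => s _; rewrite !permM.
Qed.

Lemma psd_twirl d (Y : 'M[C]_(d * d)) : psd Y -> psd (twirl Y).
Proof. by move=> psdY; apply: psd_sum => g; apply: psd_conj. Qed.

Lemma tr_swap_twirl d (Y : 'M[C]_(d * d)) :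
  tr_swap (twirl Y) = (4 ^ d)%:R * #|{: {perm 'I_d}}|%:R * tr_swap Y.
Proof.
rewrite /tr_swap.
under eq_bigr => k _ do under eq_bigr => l _ do rewrite twirlE /same_pair !eqxx orbT mul1r.
under eq_bigr => k _ do rewrite -big_distrr /=.
rewrite -big_distrr -mulrA /=; congr (_ * _).
rewrite /perm_sum mulr_natl -sumr_const.
under eq_bigr => k _ do rewrite exchange_big /=.
rewrite exchange_big /=; apply: (eq_big _ _ (fun _ => erefl)) => s _.
rewrite [RHS](reindex_inj (@perm_inj _ s)) /=; apply: eq_bigr => k _.
by rewrite [RHS](reindex_inj (@perm_inj _ s)).
Qed.

End Twirl.

Section Werner.
Variable C : numClosedFieldType.
Local Notation idx := mxtens_index.

Definition werner_mx d (A P Q : C) : 'M[C]_(d * d) :=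
  \matrix_(r, q)
    let: (a, b) := mxtens_unindex r in let: (c, e) := mxtens_unindex q in
    if a == b then ((a == c) && (a == e))%:R * A
    else ((a == c) && (b == e))%:R * P + ((a == e) && (b == c))%:R * Q.

Lemma wernerE d (A P Q : C) (a b c e : 'I_d) :
  werner_mx d A P Q (idx (a, b)) (idx (c, e)) =
  if a == b then ((a == c) && (a == e))%:R * A
  else ((a == c) && (b == e))%:R * P + ((a == e) && (b == c))%:R * Q.
Proof. by rewrite mxE !mxtens_indexK. Qed.

Lemma scale_werner d (t A P Q : C) :
  t *: werner_mx d A P Q = werner_mx d (t * A) (t * P) (t * Q).
Proof.
apply/matrixP => r q; case: (mxtens_indexP r) => a b; case: (mxtens_indexP q) => c e.
by rewrite mxE !wernerE; case: ifP => _; ring.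
Qed.

Lemma sum_diag_offdiag d (x y : C) :
  \sum_(k < d) \sum_(l < d) (if k == l then x else y) = d%:R * x + (d * (d - 1))%:R * y.
Proof.
have row k : \sum_(l < d) (if k == l then x else y) = x + (d - 1)%:R * y.
  rewrite (bigD1 k) //= eqxx (eq_bigr (fun _ => y)) => [|l]; last by rewrite eq_sym => /negPf->.
  by rewrite sumr_const cardC1 card_ord subn1 mulr_natl.
by rewrite (eq_bigr _ (fun k _ => row k)) sumr_const card_ord -[_ *+ d]mulr_natl natrM; ring.
Qed.

Lemma tr_werner d (A P Q : C) : \tr (werner_mx d A P Q) = d%:R * A + (d * (d - 1))%:R * P.
Proof.
rewrite -sum_diag_offdiag /mxtrace sum_mxtens; apply: eq_bigr => a _; apply: eq_bigr => b _.
rewrite wernerE !eqxx; case: ifPn => [/eqP->|/negPf ab]; first by rewrite eqxx mul1r.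
by rewrite ab eq_sym ab mul1r mul0r addr0.
Qed.

Lemma tr_swap_werner d (A P Q : C) : tr_swap (werner_mx d A P Q) = d%:R * A + (d * (d - 1))%:R * Q.
Proof.
rewrite -sum_diag_offdiag; apply: eq_bigr => a _; apply: eq_bigr => b _.
rewrite wernerE !eqxx; case: ifPn => [/eqP->|/negPf ab]; first by rewrite eqxx mul1r.
by rewrite ab mul0r add0r mul1r.
Qed.

Lemma projE N (v : 'cV[C]_N) p q : proj v p q = v p 0 * (v q 0)^*.
Proof. by rewrite mxE big_ord1 adjmxE. Qed.

Lemma sum_lt_delta d (a b : 'I_d) (F : 'I_d -> 'I_d -> C) :
  \sum_(i < d) \sum_(j < d | (i < j)%N) (((a == i) && (b == j))%:R * F i j) =
  (a < b)%N%:R * F a b.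
Proof.
transitivity (\sum_(i < d) ((i == a)%:R * \sum_(j < d | (i < j)%N) ((j == b)%:R * F i j))).
  apply: eq_bigr => i _; rewrite big_distrr /=; apply: eq_bigr => j _.
  by rewrite mulrA -natrM mulnb [i == a]eq_sym [j == b]eq_sym.
rewrite sum_delta_l big_mkcond (eq_bigr (fun j => (j == b)%:R * if (a < j)%N then F a j else 0)).
  by rewrite sum_delta_l; case: ifP; rewrite ?mul1r ?mul0r.
by move=> j _; case: ifP; rewrite ?mulr0.
Qed.

Lemma nat_neq_ltn d (a b : 'I_d) : (a != b) = ((a < b) + (b < a))%N :> nat.
Proof. by rewrite -(inj_eq val_inj) /=; case: ltngtP. Qed.

Lemma pair_proj_sumE d (s : C) (v : 'I_d -> 'I_d -> 'cV[C]_(d * d)) (a b c e : 'I_d) :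
  s ^+ 2 = 1 -> s^* = s -> (forall i j, v i j = ket C i j + s *: ket C j i) ->
  (\sum_(i < d) \sum_(j < d | (i < j)%N) proj (v i j)) (idx (a, b)) (idx (c, e)) =
  (a != b)%:R * (((a == c) && (b == e))%:R + s * ((a == e) && (b == c))%:R).
Proof.
move=> s2 s_real vE; rewrite summxE.
under eq_bigr => i _ do rewrite summxE.
under eq_bigr => i _ do under eq_bigr => j _ do
  rewrite vE projE !addmx_entry !scalemx_entry !ketE rmorphD rmorphM /= s_real !rmorph_nat mulrDl.
rewrite (eq_bigr _ (fun i _ => big_split _ _ _ _ _)) big_split /=.
under [X in _ + X]eq_bigr => i _ do under eq_bigr => j _ do rewrite -mulrA mulrCA andbC.
rewrite !sum_lt_delta.
rewrite nat_neq_ltn natrD ![c == _]eq_sym ![e == _]eq_sym ![(b == c) && _]andbC.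
by ring: s2.
Qed.

Lemma diag_proj_sumE d (a b c e : 'I_d) :
  (\sum_i proj (ket C i i)) (idx (a, b)) (idx (c, e)) = ((a == b) && (a == c) && (a == e))%:R.
Proof.
rewrite summxE (eq_bigr (fun i => (i == a)%:R * ((a == b) && (a == c) && (a == e))%:R)).
  by rewrite sum_delta_l.
move=> i _; rewrite projE !ketE rmorph_nat -!natrM; congr (_%:R).
case: (eqVneq i a) => [->|] //=; rewrite ![_ == a]eq_sym.
by case: (a == b); case: (a == c); case: (a == e).
Qed.

Lemma rho_abc_werner d (a b c : C) :
  rho_abc d a b c = werner_mx d a ((b + c) / 2) ((c - b) / 2).
Proof.
have halve (v : 'I_d -> 'I_d -> 'cV[C]_(d * d)) :
    \sum_(i < d) \sum_(j < d | (i < j)%N) 2^-1 *: proj (v i j) =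
    2^-1 *: \sum_(i < d) \sum_(j < d | (i < j)%N) proj (v i j).
  by rewrite scaler_sumr; apply: eq_bigr => i _; rewrite scaler_sumr.
apply/matrixP => r q; case: (mxtens_indexP r) => i j; case: (mxtens_indexP q) => k l.
rewrite /rho_abc !halve !addmx_entry !scalemx_entry diag_proj_sumE.
rewrite (pair_proj_sumE (s := -1)) ?sqrrN ?expr1n ?rmorphN1 // => [|i0 j0]; last first.
  by rewrite scaleN1r.
rewrite (pair_proj_sumE (s := 1)) ?expr1n ?rmorph1 // => [|i0 j0]; last by rewrite scale1r.
rewrite wernerE; case: ifPn => [/eqP<-|ij]; rewrite ?eqxx ?(negPf ij) /=; ring.
Qed.

End Werner.

Section TwirlWerner.
Variable C : numClosedFieldType.
Local Notation idx := mxtens_index.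

Lemma exists_perm2 (T : finType) (a b a' b' : T) :
  a != b -> a' != b' -> exists t : {perm T}, t a = a' /\ t b = b'.
Proof.
move=> ab ab'; set t1 := tperm a a'.
have a'_t1b : a' != t1 b by rewrite -{1}(tpermL a a') (inj_eq perm_inj).
exists (t1 * tperm (t1 b) b')%g; rewrite !permM !tpermL; split=> //.
by rewrite tpermD // eq_sym.
Qed.

Lemma twirl_werner d (Y : 'M[C]_(d.+2 * d.+2)) :
  twirl Y = werner_mx d.+2 ((4 ^ d.+2)%:R * perm_sum Y ord0 ord0 ord0 ord0)
    ((4 ^ d.+2)%:R * perm_sum Y ord0 ord_max ord0 ord_max)
    ((4 ^ d.+2)%:R * perm_sum Y ord0 ord_max ord_max ord0).
Proof.
apply/matrixP => r q; case: (mxtens_indexP r) => a b; case: (mxtens_indexP q) => c e.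
rewrite twirlE wernerE /same_pair.
case: ifPn => [/eqP<-|ab].
  rewrite [X in _ || X]andbC orbb; case: andP => [[/eqP<- /eqP<-]|_]; last by rewrite !mul0r.
  by rewrite -[a](tpermL ord0) perm_sum_perm /= !mul1r.
have [t [t0 tmax]] := exists_perm2 (isT : ord0 != ord_max :> 'I_d.+2) ab.
case: andP => [[/eqP<- /eqP<-]|_].
  by rewrite (negPf ab) -t0 -tmax perm_sum_perm /=; ring.
case: andP => [[/eqP<- /eqP<-]|_] /=; last by ring.
by rewrite -t0 -tmax perm_sum_perm; ring.
Qed.

Lemma tr_swap_twirl_lt0 d (Y : 'M[C]_(d * d)) : tr_swap Y < 0 -> tr_swap (twirl Y) < 0.
Proof.
move=> swapY; rewrite tr_swap_twirl pmulr_rlt0 // mulr_gt0 // ltr0n ?expn_gt0 //.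
by apply/card_gt0P; exists 1%g.
Qed.

Lemma twirl_werner_signs d (Y : 'M[C]_(d * d)) : psd Y -> tr_swap Y < 0 ->
  (1 < d)%N /\ exists A P Q : C, [/\ 0 <= A, 0 < P, Q < 0 & twirl Y = werner_mx d A P Q].
Proof.
move=> psdY swapY; case: d Y psdY swapY => [|[|d]] Y psdY swapY.
- by move: swapY; rewrite /tr_swap big_ord0 ltxx.
- move: swapY; rewrite /tr_swap !big_ord1 => /(le_lt_trans (psd_diag_ge0 _ psdY)).
  by rewrite ltxx.
split=> //; have := twirl_werner Y.
set A := _ * perm_sum _ _ _ _ _; set P := _ * perm_sum _ _ _ _ _.
set Q := _ * perm_sum _ _ _ _ _ => TY; exists A, P, Q.
have psdT : psd (werner_mx d.+2 A P Q) by rewrite -TY; apply: psd_twirl.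
have A_ge0 : 0 <= A by have := psd_diag_ge0 (idx (ord0, ord0)) psdT; rewrite wernerE !eqxx mul1r.
have Q_lt0 : Q < 0.
  have := tr_swap_twirl_lt0 swapY; rewrite TY tr_swap_werner => sum_lt0.
  have : (d.+2 * (d.+2 - 1))%:R * Q < 0.
    by apply: le_lt_trans sum_lt0; rewrite lerDr mulr_ge0 ?ler0n.
  by rewrite pmulr_rlt0 // ltr0n.
have P_gt0 : 0 < P.
  have o0max : (ord0 == ord_max :> 'I_d.+2) = false by [].
  have := psd_pair_sum_ge0 (idx (ord0, ord_max)) (idx (ord_max, ord0)) psdT.
  rewrite !wernerE !eqxx o0max eq_sym o0max /= !mul1r !mul0r !addr0 !add0r.
  have -> : P + Q + Q + P = (P + Q) *+ 2 by rewrite mulr2n; ring.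
  by rewrite pmulrn_lge0 // => PQ; rewrite -(addrK Q P) ltr_wpDl // oppr_gt0.
by split.
Qed.

Lemma rho_abc_normalized d (A P Q t : C) :
  rho_abc d (A / t) ((P - Q) / t) ((P + Q) / t) = t^-1 *: werner_mx d A P Q.
Proof.
have half2 : (2 : C)^-1 * 2 = 1 by rewrite mulVf ?pnatr_eq0.
by rewrite rho_abc_werner scale_werner; congr werner_mx; rewrite mulrC //; ring: half2.
Qed.

Lemma twirl_rho_abc d (Y : 'M[C]_(d * d)) : psd Y -> tr_swap Y < 0 ->
  exists a b c t : C, [/\ [/\ a \is Num.real, b \is Num.real, c \is Num.real & 0 < t],
    d%:R * a + (b + c) * ((d * (d - 1))%:R / 2) = 1,
    density (rho_abc d a b c), ~ psd (ptrans (rho_abc d a b c)) &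
    twirl Y = t *: rho_abc d a b c].
Proof.
move=> psdY swapY; have swapT := tr_swap_twirl_lt0 swapY.
have [d_gt1 [A [P [Q [A_ge0 P_gt0 Q_lt0 TY]]]]] := twirl_werner_signs psdY swapY.
rewrite TY in swapT; have psdT : psd (werner_mx d A P Q) by rewrite -TY; apply: psd_twirl.
have [t ht] : exists t, t = d%:R * A + (d * (d - 1))%:R * P by eexists.
have trT : \tr (werner_mx d A P Q) = t by rewrite ht tr_werner.
have t_gt0 : 0 < t.
  rewrite ht ltr_wpDl ?mulr_ge0 ?ler0n // pmulr_rgt0 // ltr0n.
  by rewrite muln_gt0 subn_gt0 d_gt1 (ltnW d_gt1).
have t_neq0 : t != 0 by rewrite gt_eqF.
exists (A / t), ((P - Q) / t), ((P + Q) / t), t; rewrite rho_abc_normalized.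
have real_div x : x \is Num.real -> x / t \is Num.real.
  by move=> xr; rewrite rpredM // rpredV gtr0_real.
split.
- have [[Ar Pr] Qr] := (ger0_real A_ge0, gtr0_real P_gt0, ltr0_real Q_lt0).
  by split=> //; apply: real_div; rewrite ?rpredB ?rpredD.
- by rewrite -(divff t_neq0) [X in _ = X / _]ht; field.
- split; first by apply: psdZ; rewrite ?invr_ge0 ?ltW.
  by rewrite mxtraceZ trT mulVf.
- by apply: not_psd_ptrans; rewrite tr_swapZ pmulr_rlt0 ?invr_gt0.
- by rewrite scalerA mulfV ?scale1r.
Qed.

End TwirlWerner.

Section Locc.
Variable C : numClosedFieldType.

Lemma locc_ext n m n' m' (f g : 'M[C]_(n * m) -> 'M[C]_(n' * m')) :
  locc f -> f =1 g -> locc g.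
Proof. by move=> Lf /funext <-. Qed.

Lemma locc_local_family n m n' m' (I : finType)
    (K : I -> 'M[C]_(n', n)) (L : I -> 'M[C]_(m', m)) :
  locc (fun X : 'M[C]_(n * m) => \sum_g (K g *t L g) *m X *m adjmx (K g *t L g)).
Proof.
apply: locc_ext (locc_alice (fun i : 'I_#|I| => K (enum_val i))
  (fun i => locc_bob (fun _ : 'I_1 => L (enum_val i)) (fun _ => locc_done C n' m'))) _.
move=> X; rewrite [RHS](eq_bigl (mem {: I})) // [RHS]big_enum_val; apply: eq_bigr => i _.
by rewrite big_ord1 mulmx_adj_conj tensmx_mul mul1mx mulmx1.
Qed.

Lemma locc_twirl_conj n m d (A : 'M[C]_(d, n)) (B : 'M[C]_(d, m)) :
  locc (fun X : 'M[C]_(n * m) => twirl ((A *t B) *m X *m adjmx (A *t B))).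
Proof.
apply: locc_ext (locc_local_family (fun g => perm_phase_mx C g *m A)
                                   (fun g => perm_phase_mx C g *m B)) _.
by move=> X; apply: eq_bigr => g _; rewrite mulmx_adj_conj tensmx_mul.
Qed.

End Locc.

Lemma Re_real_complex (R : rcfType) (x : R[i]) : x \is Num.real -> ((complex.Re x)%:C)%C = x.
Proof.
case: x => a b; rewrite realE !lecE /=.
by move=> /orP[] /andP[/eqP b0 _]; [rewrite b0 | rewrite -b0].
Qed.

Theorem theorem1 (R : realType) (n m : nat) (rho : 'M[R[i]]_(n * m)) :
  density rho -> ~ psd (ptrans rho) ->
  exists d : nat, (d <= minn n m)%N /\
  exists Phi : 'M[R[i]]_(n * m) -> 'M[R[i]]_(d * d),
    locc Phi /\
    exists a b c : R,
      d%:R * a + (b + c) * ((d * (d - 1))%:R / 2) = 1 /\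
      density (rho_abc d (rC a) (rC b) (rC c)) /\
      ~ psd (ptrans (rho_abc d (rC a) (rC b) (rC c))) /\
      exists t : R, 0 < t /\ Phi rho = rC t *: rho_abc d (rC a) (rC b) (rC c).
Proof.
move=> [psd_rho _] npt_rho.
have [v v_neg] := not_psd_sesqform_lt0 (ptrans_hermitian psd_rho.1) npt_rho.
have [A [B AB_v]] := adj_mul_factor_minn (\matrix_(i, j) v (mxtens_index (i, j)) 0).
have AB_vE i j : (adjmx A *m B) i j = v (mxtens_index (i, j)) 0 by rewrite AB_v mxE.
have swapY : tr_swap ((A *t B) *m rho *m adjmx (A *t B)) < 0.
  by rewrite (tr_swap_local_conj rho AB_vE).
have [a [b [c [t [[ar br cr t_gt0] norm dens npt TY]]]]] :=
  twirl_rho_abc (psd_conj (A *t B) psd_rho) swapY.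
exists (minn n m); split; first by [].
exists (fun X => twirl ((A *t B) *m X *m adjmx (A *t B))); split; first exact: locc_twirl_conj.
exists (complex.Re a), (complex.Re b), (complex.Re c).
rewrite /rC (Re_real_complex ar) (Re_real_complex br) (Re_real_complex cr).
split; [|split; [exact: dens | split; [exact: npt|]]].
  apply: (@complexI R); rewrite [RHS]rmorph1 -norm rmorphD !rmorphM rmorphD fmorphV !rmorph_nat /=.
  by rewrite (Re_real_complex ar) (Re_real_complex br) (Re_real_complex cr).
exists (complex.Re t); rewrite (Re_real_complex (gtr0_real t_gt0)); split; last exact: TY.
by move: t_gt0; rewrite ltcE => /andP[].
Qed.
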